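(* Let $X_\Sigma$ be a projective toric variety and $D$ an $\mathbf R$-ample divisor on $X_\Sigma$. For every primitive collection $C\subset\Sigma(1)$ there is a unique $\lambda_C\in\Lambda^D$ such that $\overline{S^{\chi_D}_{\lambda_C}}=V(x_\rho:\rho\in C)$ (Zariski closure in $\mathbf C^{\Sigma(1)}$).
   Context: $\Sigma$ complete fan with rays $\Sigma(1)$, generators $u_\rho$, divisors $D_\rho$; a primitive collection is $C\subset\Sigma(1)$ not contained in $\sigma(1)$ for any cone $\sigma$ while every proper subset is; $\mathbf C^{\Sigma(1)}=\mathrm{Spec}\,\mathbf C[x_\rho]$, $Z(\Sigma)=\bigcup_CV(x_\rho:\rho\in C)$. $\Gamma(G)=\{b\in\mathbf Z^{\Sigma(1)}:\sum b_\rho u_\rho=0\}$, $\langle\chi_D,b\rangle=\sum a_\rho b_\rho$ for $D=\sum a_\rho D_\rho$ (extended $\mathbf R$-linearly), $\Gamma(G)_{\mathbf R}\subset\mathbf R^{\Sigma(1)}$ with restricted standard norm. $\mathbf R$-ample divisors are elements of the ample cone in $\mathrm{Pic}(X_\Sigma)_{\mathbf R}$. For $x\in Z(\Sigma)$, $\sigma_x=\{v\in\Gamma(G)_{\mathbf R}:v_\rho\ge0\text{ whenever }x_\rho\ne0\}$; $v\mapsto\langle\chi_D,v\rangle/\|v\|$ attains its negative minimum $M^D(x)$ on $\sigma_x\setminus\{0\}$ exactly on one ray, and $\lambda^D_x$ is the vector on it with $\|\lambda^D_x\|=-M^D(x)$. $\Lambda^D=\{\lambda^D_x:x\in Z(\Sigma)\}$,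 $S^{\chi_D}_\lambda=\{x\in Z(\Sigma):\lambda^D_x=\lambda\}$. *)

From HB Require Import structures.
From mathcomp Require Import all_boot all_order all_algebra.
From mathcomp Require Import Rstruct.
From mathcomp Require Import complex.
From mathcomp Require Import mpoly.
Set Implicit Arguments. Unset Strict Implicit. Unset Printing Implicit Defensive.
Import Order.TTheory GRing.Theory Num.Theory.
Local Open Scope ring_scope.

Notation RR := Rdefinitions.R.
Notation CC := (Rdefinitions.R)[i].

Section Toric.
(* N = Z^n, rays indexed by 'I_r, u rho = minimal generator of ray rho *)
Variables (n r : nat) (u : 'I_r -> 'I_n -> int).

Definition mpair (m : 'I_n -> RR) (rho : 'I_r) : RR :=
  \sum_(i < n) m i * (u rho i)%:~R.

Definition in_cone (S : {set 'I_r}) (v : 'I_n -> RR) : Prop :=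
  exists c : 'I_r -> RR,
    (forall rho, 0 <= c rho) /\ (forall rho, rho \notin S -> c rho = 0) /\
    (forall i, v i = \sum_(rho < r) c rho * (u rho i)%:~R).

(* the cone generated by T is the face (cone S) ∩ m^⊥ for some m ≥ 0 on cone S *)
Definition is_face (S T : {set 'I_r}) : Prop :=
  T \subset S /\
  exists m : 'I_n -> RR,
    (forall rho, rho \in T -> mpair m rho = 0) /\
    (forall rho, rho \in S :\: T -> 0 < mpair m rho).

Definition primitive_vec (rho : 'I_r) : Prop :=
  \big[gcdz/0%Z]_(i < n) u rho i = 1%Z.

(* F = { sigma(1) : sigma in Sigma } : a (rational, strongly convex polyhedral)
   fan whose set of rays is exactly {rho} for rho : 'I_r, with minimal generators u. *)
Definition is_fan (F : {set {set 'I_r}}) : Prop :=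
  [/\ set0 \in F,
      (forall rho, [set rho] \in F),
      (forall rho, primitive_vec rho),
      (forall S T, S \in F -> is_face S T -> T \in F) &
      (forall S S', S \in F -> S' \in F ->
         [/\ is_face S (S :&: S'), is_face S' (S :&: S') &
             forall v, in_cone S v -> in_cone S' v -> in_cone (S :&: S') v])].

Definition complete_fan (F : {set {set 'I_r}}) : Prop :=
  forall v : 'I_n -> RR, exists2 S, S \in F & in_cone S v.

Definition maximal_cone (F : {set {set 'I_r}}) (S : {set 'I_r}) : Prop :=
  S \in F /\ forall S', S' \in F -> S \subset S' -> S' = S.

(* D = sum_rho a_rho D_rho is R-ample: its support function is (R-Cartier and)
   strictly convex, i.e. for each maximal cone sigma there is m_sigma with
   <m_sigma,u_rho> = -a_rho on sigma(1) and > -a_rho off sigma(1). *)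
Definition R_ample (F : {set {set 'I_r}}) (a : 'I_r -> RR) : Prop :=
  forall S, maximal_cone F S ->
    exists m : 'I_n -> RR,
      (forall rho, rho \in S -> mpair m rho = - a rho) /\
      (forall rho, rho \notin S -> - a rho < mpair m rho).

Definition primitive_collection (F : {set {set 'I_r}}) (C : {set 'I_r}) : Prop :=
  (forall S, S \in F -> ~~ (C \subset S)) /\
  (forall C' : {set 'I_r}, C' \proper C -> exists2 S, S \in F & C' \subset S).

Definition Vcoord (C : {set 'I_r}) (x : 'I_r -> CC) : Prop :=
  forall rho, rho \in C -> x rho = 0.

Definition in_Z (F : {set {set 'I_r}}) (x : 'I_r -> CC) : Prop :=
  exists C, primitive_collection F C /\ Vcoord C x.

Definition in_GammaR (v : 'I_r -> RR) : Prop :=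
  forall i : 'I_n, \sum_(rho < r) v rho * (u rho i)%:~R = 0.

Definition sigma_x (x : 'I_r -> CC) (v : 'I_r -> RR) : Prop :=
  in_GammaR v /\ forall rho, x rho != 0 -> 0 <= v rho.

Definition chi_pair (a v : 'I_r -> RR) : RR := \sum_(rho < r) a rho * v rho.

Definition vnorm (v : 'I_r -> RR) : RR := Num.sqrt (\sum_(rho < r) v rho ^+ 2).

(* lam = lambda^D_x : lam is on a ray of sigma_x \ {0} minimizing
   <chi_D,v>/||v||, and ||lam|| = - M^D(x) *)
Definition is_lambda (a : 'I_r -> RR) (x : 'I_r -> CC) (lam : 'I_r -> RR) : Prop :=
  [/\ sigma_x x lam, lam <> (fun _ => 0),
      (forall v, sigma_x x v -> v <> (fun _ => 0) ->
         chi_pair a lam / vnorm lam <= chi_pair a v / vnorm v) &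
      vnorm lam = - (chi_pair a lam / vnorm lam)].

Definition in_Lambda (F : {set {set 'I_r}}) (a : 'I_r -> RR) (lam : 'I_r -> RR) : Prop :=
  exists x, in_Z F x /\ is_lambda a x lam.

Definition stratum (F : {set {set 'I_r}}) (a : 'I_r -> RR) (lam : 'I_r -> RR)
  (x : 'I_r -> CC) : Prop :=
  in_Z F x /\ is_lambda a x lam.

End Toric.

Definition zariski_closure (r : nat) (S : ('I_r -> CC) -> Prop) (y : 'I_r -> CC) : Prop :=
  forall p : {mpoly CC[r]}, (forall x, S x -> p.@[x] = 0) -> p.@[y] = 0.

From HB Require Import structures.
From mathcomp Require Import all_boot all_order all_algebra.
From mathcomp Require Import Rstruct complex mpoly.
From mathcomp Require Import boolp classical_sets reals.
From mathcomp Require Import topology normedtype derive realfun.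
From mathcomp Require Import ring lra.
From mathcomp Require Import fintype finset.
Import Order.TTheory GRing.Theory Num.Theory.
Local Open Scope ring_scope.
Set Implicit Arguments. Unset Strict Implicit.

(* Let x_C be a point whose zero set is exactly C. The primitive relation of C
   gives a vector of sigma_{x_C} on which chi_D is negative (strict convexity of
   the support function of D), so chi_D/||.|| attains a negative minimum on the
   closed cone sigma_{x_C}; the normalized minimizer lambda_C is unique because
   the cone is convex and the Euclidean norm strictly convex. As sigma_x only
   depends on the zero set of x, lambda_C is the lambda of every point with zero
   set C, and these points are dense in V(C). Conversely every point of
   S_{lambda_C} vanishes on C: otherwise lambda_C would be nonnegative off a
   proper subset of C, which lies in a cone, forcing chi_D(lambda_C) >= 0. A point
   of the closure of a set S has a zero set containing that of some point of S,
   so the closure of S_{lambda_C} is V(C), and any lambda with this closure is the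
   lambda of a point with zero set C, that is lambda = lambda_C. *)

Definition polycone (R : numDomainType) (k r : nat) (c : 'I_r -> 'I_k -> R)
    (P : pred 'I_r) (v : 'I_r -> R) : Prop :=
  (forall j, \sum_i v i * c i j = 0) /\ (forall i, P i -> 0 <= v i).

Section Polycone.
Variables (R : numDomainType) (k r : nat) (c : 'I_r -> 'I_k -> R) (P : pred 'I_r).

Lemma polyconeD v w : polycone c P v -> polycone c P w ->
  polycone c P (fun i => v i + w i).
Proof.
move=> [v0 vP] [w0 wP]; split=> [j|i Pi]; last by rewrite addr_ge0 ?vP ?wP.
by under eq_bigr do rewrite mulrDl; rewrite big_split /= v0 w0 addr0.
Qed.

Lemma polyconeZ t v : 0 <= t -> polycone c P v -> polycone c P (fun i => t * v i).
Proof.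
move=> t_ge0 [v0 vP]; split=> [j|i Pi]; last by rewrite mulr_ge0 ?vP.
by under eq_bigr do rewrite -mulrA; rewrite -mulr_sumr v0 mulr0.
Qed.

End Polycone.

Section PolyconeSphere.
Local Open Scope classical_set_scope.
Import numFieldNormedType.Exports.
Variables (R : realType) (k r : nat) (c : 'I_r -> 'I_k -> R) (P : pred 'I_r).

Let unit_polycone :=
  [set v : 'rV[R]_r | polycone c P (v ord0) /\ \sum_i v ord0 i ^+ 2 = 1].

Lemma continuous_coord_sum (g : 'I_r -> R -> R) :
  (forall i, continuous (g i)) ->
  continuous (fun v : 'rV[R]_r => \sum_i g i (v ord0 i)).
Proof.
move=> gc; apply: continuous_big => [|i _ v]; first exact: add_continuous.
by apply: continuous_comp; [exact: coord_continuous | exact: gc].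
Qed.

Lemma closed_unit_polycone : closed unit_polycone.
Proof.
have -> : unit_polycone =
  \bigcap_j ((fun v : 'rV[R]_r => \sum_i v ord0 i * c i j) @^-1` [set 0]) `&`
  \bigcap_(i in P) ((fun v : 'rV[R]_r => v ord0 i) @^-1` [set x | 0 <= x]) `&`
  ((fun v : 'rV[R]_r => \sum_i v ord0 i ^+ 2) @^-1` [set 1]).
  apply/seteqP; split => v /=.
    by move=> [[h0 hP] h1]; split; [split=> [j _|i Pi] |]; [apply: h0|apply: hP|].
  by move=> [[h0 hP] h1]; split; [split=> [j|i Pi] |]; [apply: h0|apply: hP|].
apply: closedI; [apply: closedI|].
- apply: closed_bigI => j _; apply: preimage_closed; last exact: closed_eq.
  move=> v _; exact: (continuous_coord_sum (fun i => @mulrr_continuous R (c i j))).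
- apply: closed_bigI => i _; apply: preimage_closed; last exact: closed_ge.
  move=> v _; exact: coord_continuous.
- apply: preimage_closed; last exact: closed_eq.
  move=> v _; exact: (continuous_coord_sum (fun i => @exprn_continuous R 2)).
Qed.

Lemma bounded_unit_polycone : bounded_set unit_polycone.
Proof.
exists 1; split => // y y_gt1 v [_ v1].
rewrite /Num.norm /= mx_normrE; apply/bigmax_leP; split => [|[i0 i] _ /=]; first lra.
rewrite (ord1 i0); apply: le_trans (ltW y_gt1).
have : v ord0 i ^+ 2 <= 1.
  by rewrite -v1 (bigD1 i) //= lerDl sumr_ge0 // => j _; exact: sqr_ge0.
by move=> vi1; rewrite ler_norml; apply/andP; split; nra.
Qed.

Lemma unit_polycone_linear_min (a v0 : 'I_r -> R) :
  polycone c P v0 -> \sum_i v0 i ^+ 2 = 1 ->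
  exists w, [/\ polycone c P w, \sum_i w i ^+ 2 = 1 &
    forall v, polycone c P v -> \sum_i v i ^+ 2 = 1 ->
      \sum_i a i * w i <= \sum_i a i * v i].
Proof.
have rowK (v : 'I_r -> R) : (\row_i v i) ord0 = v by apply/funext => i; rewrite mxE.
move=> v0_cone v0_1.
have nonempty : unit_polycone !=set0.
  by exists (\row_i v0 i); rewrite /unit_polycone /= rowK.
have objective_cont : {within unit_polycone,
    continuous (fun v : 'rV[R]_r => \sum_i a i * v ord0 i)}.
  apply: continuous_subspaceT.
  exact: (continuous_coord_sum (fun i => @mulrl_continuous R (a i))).
have [w /set_mem [w_cone w1] w_min] := compact_EVT_min nonempty
  (bounded_closed_compact bounded_unit_polycone closed_unit_polycone) objective_cont.
exists (w ord0); split => // v v_cone v1.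
have := w_min (\row_i v i); rewrite rowK; apply.
by apply/mem_set; rewrite /unit_polycone /= rowK.
Qed.

End PolyconeSphere.

Definition zeroset (R : nmodType) (r : nat) (x : 'I_r -> R) : {set 'I_r} :=
  [set rho | x rho == 0].

Lemma exists_zeroset (R : nzRingType) (r : nat) (C : {set 'I_r}) :
  exists x : 'I_r -> R, zeroset x = C.
Proof.
exists (fun rho => (rho \notin C)%:R); apply/setP => rho.
by rewrite inE; case: (rho \in C); rewrite ?eqxx ?oner_eq0.
Qed.

Lemma closure_zeroset_sub (R : idomainType) (r : nat)
    (S : ('I_r -> R) -> Prop) (y : 'I_r -> R) :
  (forall p : {mpoly R[r]}, (forall x, S x -> p.@[x] = 0) -> p.@[y] = 0) ->
  exists2 x, S x & zeroset x \subset zeroset y.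
Proof.
move=> closure_y.
(* [p] does not vanish at [y], hence not at some [x] in [S], and such an [x]
   has no zero on the support of [y]. *)
pose p : {mpoly R[r]} := \prod_(rho | y rho != 0) 'X_rho.
have pE z : p.@[z] = \prod_(rho | y rho != 0) z rho.
  by rewrite rmorph_prod; apply: eq_bigr => rho _; exact: mevalXU.
have : ~ (forall x, S x -> p.@[x] = 0).
  by move=> /closure_y /eqP; rewrite pE => /prodf_eq0 [rho /negPf ->].
case/existsNP => x /not_implyP [Sx px]; exists x => //.
apply/subsetP => rho; rewrite !inE => /eqP x0; apply/negPn/negP => y0.
by apply: px; rewrite pE (bigD1 rho) //= x0 mul0r.
Qed.

Lemma zeroset_eq_dense (R : numDomainType) (r : nat)
    (C : {set 'I_r}) (p : {mpoly R[r]}) (y : 'I_r -> R) :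
  (forall x, zeroset x = C -> p.@[x] = 0) -> C \subset zeroset y -> p.@[y] = 0.
Proof.
move=> p0 Cy.
(* [f] is [p] along [line]; as [line t] has zero set [C] unless [g.[t] = 0],
   [f * g] has infinitely many roots, so [f = 0], and [line 0 = y]. *)
pose line (i : 'I_r) : {poly R} := if i \in C then 0 else 'X + (y i)%:P.
pose f := \sum_(m <- msupp p) (p@_m)%:P * \prod_i line i ^+ m i.
have fE t : f.[t] = p.@[fun i => (line i).[t]].
  rewrite mevalE /f horner_sum; apply: eq_bigr => m _.
  rewrite hornerCM horner_prod; congr (_ * _).
  by apply: eq_bigr => i _; rewrite horner_exp.
pose g := \prod_(i | i \notin C) ('X + (y i)%:P).
have fg0 : f * g = 0.
  apply: (@roots_geq_poly_eq0 _ _ [seq k%:R | k <- iota 0 (size (f * g))]).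
  - apply/allP => t _; rewrite /root hornerM.
    have [->|gt0] := eqVneq g.[t] 0; first by rewrite mulr0.
    rewrite fE p0 ?mul0r //; apply/setP => i; rewrite inE /line.
    case: ifP => iC; first by rewrite hornerC eqxx.
    move: gt0; rewrite /g horner_prod => /prodf_neq0 /(_ i (negbT iC)).
    by rewrite hornerD hornerX hornerC => /negbTE.
  - by rewrite map_inj_uniq ?iota_uniq // => i j /eqP; rewrite eqr_nat => /eqP.
  - by rewrite size_map size_iota.
have f0 : f = 0.
  have g_monic : g \is monic by apply: monic_prod => i _; exact: monicXaddC.
  by apply/eqP; move/eqP: fg0; rewrite mulf_eq0 (negbTE (monic_neq0 g_monic)) orbF.
have -> : y = fun i => (line i).[0].
  apply/funext => i; rewrite /line; case: ifPn => iC.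
    by rewrite hornerC; apply/eqP; move/subsetP: Cy => /(_ i iC); rewrite inE.
  by rewrite hornerD hornerX hornerC add0r.
by rewrite -fE f0 horner0.
Qed.

Section MinDirection.
Variable r : nat.
Implicit Types (a v w : 'I_r -> RR) (K : ('I_r -> RR) -> Prop).

Definition min_direction K a lam : Prop :=
  [/\ K lam, lam <> (fun _ => 0),
      (forall v, K v -> v <> (fun _ => 0) ->
         chi_pair a lam / vnorm lam <= chi_pair a v / vnorm v) &
      vnorm lam = - (chi_pair a lam / vnorm lam)].

Lemma chi_pairD a v w :
  chi_pair a (fun i => v i + w i) = chi_pair a v + chi_pair a w.
Proof. by rewrite /chi_pair -big_split; apply: eq_bigr => i _; rewrite mulrDr. Qed.

Lemma chi_pairZ a t v : chi_pair a (fun i => t * v i) = t * chi_pair a v.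
Proof. by rewrite /chi_pair mulr_sumr; apply: eq_bigr => i _; rewrite mulrCA. Qed.

Lemma chi_pair0 a : chi_pair a (fun _ => 0) = 0.
Proof. by rewrite /chi_pair big1 // => i _; rewrite mulr0. Qed.

Lemma vnorm_sqr v : vnorm v ^+ 2 = \sum_i v i ^+ 2.
Proof. by rewrite sqr_sqrtr // sumr_ge0 // => i _; exact: sqr_ge0. Qed.

Lemma vnorm_gt0 v : v <> (fun _ => 0) -> 0 < vnorm v.
Proof.
move=> v_neq0; rewrite sqrtr_gt0 lt_def psumr_eq0 => [|i _]; last exact: sqr_ge0.
rewrite sumr_ge0 ?andbT => [|i _]; last exact: sqr_ge0.
apply: contra_notN v_neq0 => /allP v0; apply/funext => i.
by apply/eqP; rewrite -sqrf_eq0; apply: v0; exact: mem_index_enum.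
Qed.

Lemma vnormZ t v : vnorm (fun i => t * v i) = `|t| * vnorm v.
Proof.
rewrite /vnorm -sqrtr_sqr -sqrtrM ?sqr_ge0 // mulr_sumr.
by congr Num.sqrt; apply: eq_bigr => i _; rewrite exprMn.
Qed.

Lemma vnorm_parallelogram v w :
  vnorm (fun i => v i + w i) ^+ 2 + vnorm (fun i => v i - w i) ^+ 2 =
  2 * vnorm v ^+ 2 + 2 * vnorm w ^+ 2.
Proof.
rewrite !vnorm_sqr !mulr_sumr -!big_split; apply: eq_bigr => i _ /=; ring.
Qed.

Lemma min_direction_chi K a lam :
  min_direction K a lam -> chi_pair a lam = - vnorm lam ^+ 2.
Proof.
case=> _ /vnorm_gt0 lam_gt0 _ lamE.
by rewrite -(divfK (lt0r_neq0 lam_gt0) (chi_pair a lam)) -[X in X * _]opprK -lamE mulNr.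
Qed.

Lemma min_direction_value K a lam :
  min_direction K a lam -> chi_pair a lam / vnorm lam = - vnorm lam.
Proof. by case=> _ _ _ lamE; rewrite {2}lamE opprK. Qed.

Lemma min_direction_unique K a l1 l2 :
  (forall v w, K v -> K w -> K (fun i => v i + w i)) ->
  min_direction K a l1 -> min_direction K a l2 -> l1 = l2.
Proof.
move=> K_add min1 min2.
(* Minimality at [l1 + l2] forces [||l1 + l2|| >= ||l1|| + ||l2||], and the
   parallelogram law turns this equality case into [l1 = l2]. *)
have chi1 := min_direction_chi min1; have chi2 := min_direction_chi min2.
have val1 := min_direction_value min1; have val2 := min_direction_value min2.
case: min1 min2 => K1 l1_neq0 le1 _ [K2 l2_neq0 le2 _].
have N1 := vnorm_gt0 l1_neq0.
have N12 : vnorm l1 = vnorm l2.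
  by have := le1 _ K2 l2_neq0; have := le2 _ K1 l1_neq0; rewrite val1 val2; lra.
pose w i := l1 i + l2 i.
have chiw : chi_pair a w = - 2 * vnorm l1 ^+ 2 by rewrite chi_pairD chi1 chi2 -N12; ring.
have w_neq0 : w <> (fun _ => 0).
  by move=> w0; move: chiw; rewrite w0 chi_pair0; nra.
have Nw := vnorm_gt0 w_neq0.
have Nw_ge : 2 * vnorm l1 <= vnorm w.
  by have := le1 _ (K_add _ _ K1 K2) w_neq0; rewrite val1 chiw ler_pdivlMr //; nra.
have par := vnorm_parallelogram l1 l2; rewrite -N12 in par.
have d0 : (fun i => l1 i - l2 i) = (fun _ => 0).
  by apply: contrapT => /vnorm_gt0 Nd; rewrite -/w in par; nra.
apply/funext => i; apply/eqP; rewrite -subr_eq0; apply/eqP.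
exact: (congr1 (fun f => f i) d0).
Qed.

Lemma normalized_sumsqr v :
  v <> (fun _ => 0) -> \sum_i ((vnorm v)^-1 * v i) ^+ 2 = 1.
Proof.
move=> /vnorm_gt0 Nv.
by rewrite -vnorm_sqr vnormZ ger0_norm ?invr_ge0 ?ltW // mulVf ?expr1n ?lt0r_neq0.
Qed.

Lemma min_direction_exists k (c : 'I_r -> 'I_k -> RR) (P : pred 'I_r) a v0 :
  polycone c P v0 -> chi_pair a v0 < 0 ->
  exists lam, min_direction (polycone c P) a lam.
Proof.
move=> v0_cone chi_v0.
have normalize_cone v : polycone c P v -> polycone c P (fun i => (vnorm v)^-1 * v i).
  by apply: polyconeZ; rewrite invr_ge0 sqrtr_ge0.
have v0_neq0 : v0 <> (fun _ => 0).
  by move=> v00; move: chi_v0; rewrite v00 chi_pair0 ltxx.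
have [w [w_cone w1 w_min]] := unit_polycone_linear_min a
  (normalize_cone _ v0_cone) (normalized_sumsqr v0_neq0).
pose M := chi_pair a w.
have M_le v : polycone c P v -> v <> (fun _ => 0) -> M <= chi_pair a v / vnorm v.
  move=> v_cone v_neq0.
  have : M <= chi_pair a (fun i => (vnorm v)^-1 * v i).
    exact: w_min (normalize_cone _ v_cone) (normalized_sumsqr v_neq0).
  by rewrite chi_pairZ mulrC.
have M_lt0 : M < 0.
  apply: le_lt_trans (M_le _ v0_cone v0_neq0) _.
  by rewrite pmulr_llt0 ?invr_gt0 ?vnorm_gt0.
have Nw : vnorm w = 1 by rewrite /vnorm w1 sqrtr1.
have Nlam : vnorm (fun i => - M * w i) = - M.
  by rewrite vnormZ Nw mulr1 ger0_norm // oppr_ge0 ltW.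
have val : chi_pair a (fun i => - M * w i) / vnorm (fun i => - M * w i) = M.
  by rewrite Nlam chi_pairZ -/M mulrC mulKf // oppr_eq0 lt_eqF.
exists (fun i => - M * w i); split.
- by apply: polyconeZ => //; rewrite oppr_ge0 ltW.
- by move=> lam0; have := chi_pairZ a (- M) w; rewrite lam0 chi_pair0 -/M; nra.
- by move=> v v_cone v_neq0; rewrite val; exact: M_le.
- by rewrite val Nlam.
Qed.

End MinDirection.

Lemma maximal_cone_exists (r : nat) (F : {set {set 'I_r}}) S :
  S \in F -> exists2 S', maximal_cone F S' & S \subset S'.
Proof.
move=> SF; have [S' /maxsetP [S'F S'max] SS'] := maxset_exists (P := mem F) SF.
by exists S' => //; split=> // T TF; exact: S'max.
Qed.

Lemma Vcoord_zeroset (r : nat) (C : {set 'I_r}) (x : 'I_r -> CC) :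
  Vcoord C x <-> C \subset zeroset x.
Proof.
split=> [Cx|/subsetP Cx rho /Cx]; last by rewrite inE => /eqP.
by apply/subsetP => rho /Cx x0; rewrite inE x0.
Qed.

Section AmpleDivisor.
Variables (n r : nat) (u : 'I_r -> 'I_n -> int) (F : {set {set 'I_r}}) (a : 'I_r -> RR).

Implicit Types (m : 'I_n -> RR) (S C : {set 'I_r}) (v lam : 'I_r -> RR)
  (x : 'I_r -> CC).

Let uR rho i : RR := (u rho i)%:~R.

Lemma sigma_xE x : sigma_x u x = polycone uR (fun rho => rho \notin zeroset x).
Proof.
apply/funext => v; apply/propext.
have zE rho : (rho \notin zeroset x) = (x rho != 0) by rewrite inE.
split=> -[v0 vpos]; split=> // rho; first by rewrite /= zE; exact: vpos.
by rewrite -zE; exact: vpos.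
Qed.

Lemma is_lambdaE x : is_lambda u a x = min_direction (sigma_x u x) a.
Proof. by []. Qed.

Lemma is_lambda_unique x l1 l2 :
  is_lambda u a x l1 -> is_lambda u a x l2 -> l1 = l2.
Proof. by rewrite is_lambdaE sigma_xE; apply: min_direction_unique; exact: polyconeD. Qed.

Lemma sum_mpair_gamma m v : in_GammaR u v -> \sum_rho mpair u m rho * v rho = 0.
Proof.
move=> v_gamma; rewrite /mpair; under eq_bigr do rewrite mulr_suml.
rewrite exchange_big /=; apply: big1 => i _.
rewrite -[RHS](mulr0 (m i)) -[in RHS](v_gamma i) mulr_sumr.
by apply: eq_bigr => rho _; ring.
Qed.

Lemma chi_pair_offcone m S v :
  (forall rho, rho \in S -> mpair u m rho = - a rho) -> in_GammaR u v ->
  chi_pair a v = \sum_(rho | rho \notin S) (a rho + mpair u m rho) * v rho.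
Proof.
move=> mS v_gamma.
transitivity (chi_pair a v + \sum_rho mpair u m rho * v rho).
  by rewrite sum_mpair_gamma // addr0.
rewrite /chi_pair -big_split (bigID (mem S)) /= big1 ?add0r => [|rho rS].
  by apply: eq_bigr => rho _; rewrite mulrDl.
by rewrite -mulrDl mS // addrN mul0r.
Qed.

Hypothesis ample : R_ample u F a.

Lemma chi_pair_ge0 S v : maximal_cone F S -> in_GammaR u v ->
  (forall rho, rho \notin S -> 0 <= v rho) -> 0 <= chi_pair a v.
Proof.
move=> /ample [m [mS m_off]] v_gamma v_ge0.
rewrite (chi_pair_offcone mS v_gamma) sumr_ge0 // => rho rS.
by rewrite mulr_ge0 ?v_ge0 //; have := m_off rho rS; lra.
Qed.

Lemma chi_pair_lt0 S v rho0 : maximal_cone F S -> in_GammaR u v ->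
  (forall rho, rho \notin S -> v rho <= 0) -> rho0 \notin S -> v rho0 < 0 ->
  chi_pair a v < 0.
Proof.
move=> /ample [m [mS m_off]] v_gamma v_le0 r0S v_r0.
have m_gt0 rho : rho \notin S -> 0 < a rho + mpair u m rho by move/m_off; lra.
rewrite (chi_pair_offcone mS v_gamma) (bigD1 rho0) //=.
have : (a rho0 + mpair u m rho0) * v rho0 < 0 by rewrite pmulr_rlt0 ?m_gt0.
suff : \sum_(rho | (rho \notin S) && (rho != rho0)) (a rho + mpair u m rho) * v rho <= 0.
  by lra.
by rewrite sumr_le0 // => rho /andP [rS _]; rewrite mulr_ge0_le0 ?v_le0 ?ltW ?m_gt0.
Qed.

Lemma primitive_relation_chi_lt0 C :
  complete_fan u F -> (forall S, S \in F -> ~~ (C \subset S)) ->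
  exists2 v, polycone uR (fun rho => rho \notin C) v & chi_pair a v < 0.
Proof.
move=> complete C_notin.
(* [v = c - 1_C] is the primitive relation of [C]: off a maximal cone [S']
   containing the support of [c] it equals [- 1_C], and [C] is not in [S']. *)
have [S SF [c [c_ge0 [c_off c_sum]]]] := complete (fun i => \sum_(rho in C) uR rho i).
have [S' S'max SS'] := maximal_cone_exists SF.
have /subsetPn [rho0 r0C r0S'] := C_notin _ S'max.1.
have c_off' rho : rho \notin S' -> c rho = 0.
  by move=> rS'; apply: c_off; apply: contra rS'; exact: (subsetP SS').
pose v rho := c rho - (rho \in C)%:R.
have v_gamma : in_GammaR u v.
  move=> j; under eq_bigr do rewrite mulrBl.
  rewrite sumrB -c_sum /= big_mkcond -sumrB; apply: big1 => rho _.
  by case: (rho \in C); rewrite ?mul1r ?mul0r subrr.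
exists v; first by split=> // rho rC; rewrite /v (negbTE rC) subr0 c_ge0.
apply: (chi_pair_lt0 S'max v_gamma _ r0S').
  by move=> rho rS'; rewrite /v c_off' // sub0r oppr_le0 ler0n.
by rewrite /v c_off' // r0C sub0r oppr_lt0 ltr01.
Qed.

Lemma lambda_ge0_off_zeroset C x lam :
  (forall C', C' \proper C -> exists2 S, S \in F & C' \subset S) ->
  is_lambda u a x lam -> (forall rho, rho \notin C -> 0 <= lam rho) ->
  C \subset zeroset x.
Proof.
move=> C_sub lam_x lam_ge0.
have chi_lt0 : chi_pair a lam < 0.
  by rewrite (min_direction_chi lam_x) oppr_lt0 exprn_gt0 // vnorm_gt0 //; case: lam_x.
case: lam_x => [[lam_gamma lam_pos] _ _ _].
apply/subsetP => rho rC; rewrite inE; apply/negPn/negP => x_rho.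
have [S SF CS] := C_sub _ (properD1 rC).
have [S' S'max SS'] := maximal_cone_exists SF.
suff : 0 <= chi_pair a lam by lra.
apply: (chi_pair_ge0 S'max lam_gamma) => rho' r'S'.
have [->|r'r] := eqVneq rho' rho; first exact: lam_pos.
apply: lam_ge0; apply: contra r'S' => r'C.
by apply/(subsetP SS')/(subsetP CS); rewrite in_setD1 r'r.
Qed.

Section PrimitiveCollection.
Variable C : {set 'I_r}.
Hypothesis primitive : primitive_collection F C.

Let cone_C := polycone uR (fun rho => rho \notin C).

Lemma lambda_primitive_exists :
  complete_fan u F -> exists lam, min_direction cone_C a lam.
Proof.
move=> complete.
have [v0 v0_cone chi_v0] := primitive_relation_chi_lt0 complete primitive.1.
exact: min_direction_exists v0_cone chi_v0.
Qed.

Lemma is_lambda_zeroset x lam :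
  zeroset x = C -> is_lambda u a x lam = min_direction cone_C a lam.
Proof. by move=> xC; rewrite is_lambdaE sigma_xE xC. Qed.

Lemma stratum_closure lam : min_direction cone_C a lam ->
  forall y, zariski_closure (stratum u F a lam) y <-> Vcoord C y.
Proof.
move=> lam_min y; split=> [/closure_zeroset_sub [x [_ lam_x] xy]|/Vcoord_zeroset Cy p p0].
  apply/Vcoord_zeroset; apply: subset_trans xy.
  by apply: (lambda_ge0_off_zeroset primitive.2 lam_x); case: lam_min => -[].
apply: (zeroset_eq_dense (C := C)) => // x xC; apply: p0; split.
  by exists C; split=> //; apply/Vcoord_zeroset; rewrite xC.
by rewrite is_lambda_zeroset.
Qed.

Lemma stratum_closure_unique lam lam' : min_direction cone_C a lam ->
  (forall y, zariski_closure (stratum u F a lam') y <-> Vcoord C y) -> lam = lam'.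
Proof.
move=> lam_min closure'.
have [xC xC_zero] := exists_zeroset CC C.
have /closure'/closure_zeroset_sub [x x_stratum xxC] : Vcoord C xC.
  by apply/Vcoord_zeroset; rewrite xC_zero.
have /closure'/Vcoord_zeroset Cx : zariski_closure (stratum u F a lam') x.
  by move=> p; apply.
have x_zero : zeroset x = C by apply/eqP; rewrite eqEsubset Cx -xC_zero xxC.
rewrite -(is_lambda_zeroset lam x_zero) in lam_min.
exact: is_lambda_unique lam_min x_stratum.2.
Qed.

End PrimitiveCollection.
End AmpleDivisor.

Theorem corollary5p32 (n r : nat) (u : 'I_r -> 'I_n -> int)
  (F : {set {set 'I_r}}) (a : 'I_r -> RR) :
  is_fan u F -> complete_fan u F -> R_ample u F a ->
  forall C : {set 'I_r}, primitive_collection F C ->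
  exists! lam : 'I_r -> RR,
    in_Lambda u F a lam /\
    (forall y : 'I_r -> CC,
       zariski_closure (stratum u F a lam) y <-> Vcoord C y).
Proof.
move=> _ complete ample C primitive.
have [lam lam_min] := lambda_primitive_exists ample primitive complete.
have [xC xC_zero] := exists_zeroset CC C.
exists lam; split; first split.
- exists xC; split; last by rewrite (is_lambda_zeroset u a _ xC_zero).
  by exists C; split=> //; apply/Vcoord_zeroset; rewrite xC_zero.
- exact: stratum_closure.
- by move=> lam' [_ closure']; exact: stratum_closure_unique closure'.
Qed.
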